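(* Let $H$ be a separable Hilbert space, $\mathbb{J}\subseteq\mathbb{Z}$, $\{H_j\}_{j\in\mathbb{J}}$ separable Hilbert spaces and $\Lambda_j\in\mathcal{B}(H,H_j)$ for $j\in\mathbb{J}$, such that $\{\Lambda_j\}_{j\in\mathbb{J}}$ is a g-frame for $H$ with respect to $\{H_j\}_{j\in\mathbb{J}}$. Let $S=\sum_{j\in\mathbb{J}}\Lambda_j^*\Lambda_j$ be its g-frame operator and $\tilde{\Lambda}_j:=\Lambda_jS^{-1}$. For $\mathbb{I}\subseteq\mathbb{J}$ define $S_{\mathbb{I}}f:=\sum_{j\in\mathbb{I}}\Lambda_j^*\tilde{\Lambda}_jf$ for $f\in H$, and let $\mathbb{I}^c=\mathbb{J}\setminus\mathbb{I}$. Then for every $f\in H$, $$\sum_{j\in\mathbb{I}}\langle \tilde{\Lambda}_j f,\Lambda_j f\rangle-\Vert S_{\mathbb{I}}f\Vert^2 =\sum_{j\in\mathbb{I}^c}\overline{\langle \tilde{\Lambda}_j f,\Lambda_j f\rangle}-\Vert S_{\mathbb{I}^c}f\Vert^2.$$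
   Context: A family $\{\Lambda_j\}_{j\in\mathbb{J}}$ with $\Lambda_j\in\mathcal{B}(H,H_j)$ is a g-frame for $H$ with respect to $\{H_j\}$ if there exist $0<A\le B<\infty$ with $A\Vert f\Vert^2\le\sum_{j\in\mathbb{J}}\Vert\Lambda_jf\Vert^2\le B\Vert f\Vert^2$ for all $f\in H$. Its g-frame operator $Sf=\sum_{j}\Lambda_j^*\Lambda_jf$ is bounded, positive and invertible; $\{\tilde{\Lambda}_j\}$ is the canonical dual g-frame. *)

From HB Require Import structures.
From mathcomp Require Import all_boot all_order all_algebra.
From mathcomp Require Import complex.
From mathcomp Require Import finmap.
From mathcomp Require Import all_classical all_reals all_analysis.
Import numFieldNormedType.Exports.
Import Order.TTheory GRing.Theory Num.Theory.

Set Implicit Arguments.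
Unset Strict Implicit.
Unset Printing Implicit Defensive.

Local Open Scope ring_scope.
Local Open Scope classical_set_scope.

Record HilbertSpace (R : realType) := {
  hcarrier :> completeNormedModType R[i];
  hip : hcarrier -> hcarrier -> R[i];
  hip_linear : forall (a : R[i]) (x y z : hcarrier),
      hip (a *: x + y) z = a * hip x z + hip y z;
  hip_conj : forall x y : hcarrier, hip x y = (hip y x)^*;
  hip_norm : forall x : hcarrier, hip x x = `|x| ^+ 2
}.

Arguments hip {R} h _ _.

Definition separable (R : realType) (H : HilbertSpace R) : Prop :=
  exists D : set H, countable D /\ closure D = setT.

Definition bounded_linear (R : realType) (H K : HilbertSpace R) (T : H -> K) : Prop :=
  (forall (a : R[i]) (x y : H), T (a *: x + y) = a *: T x + T y) /\
  exists M : R[i], forall x : H, `|T x| <= M * `|x|.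

Definition is_adjoint (R : realType) (H K : HilbertSpace R) (T : H -> K) (Ts : K -> H) : Prop :=
  forall (x : H) (y : K), hip K (T x) y = hip H x (Ts y).

Definition fin_net (I : set int) : set_system {fset int} :=
  fun P => exists A : {fset int}, [set` A] `<=` I /\
    forall B : {fset int}, (A `<=` B)%fset -> [set` B] `<=` I -> P B.

Definition psum (V : zmodType) (u : int -> V) (A : {fset int}) : V :=
  \sum_(j <- A) u j.

(* unconditional convergence / value of the series sum_{j in I} u j *)
Definition hsummable (K : numFieldType) (V : normedModType K) (I : set int) (u : int -> V) : Prop :=
  exists l : V, fmap (psum u) (fin_net I) --> l.

Definition hsum (K : numFieldType) (V : normedModType K) (I : set int) (u : int -> V) : V :=
  lim (fmap (psum u) (fin_net I)).

(* scalar (complex) series, with C regarded as a normed space over itself *)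
Definition csum (R : realType) (I : set int) (u : int -> R[i]) : R[i] :=
  @hsum R[i] (R[i])^o I u.
Definition csummable (R : realType) (I : set int) (u : int -> R[i]) : Prop :=
  @hsummable R[i] (R[i])^o I u.

Definition gframe (R : realType) (H : HilbertSpace R) (Hj : int -> HilbertSpace R)
  (J : set int) (Lam : forall j, H -> Hj j) : Prop :=
  exists A B : R[i], 0 < A /\ A <= B /\
    forall f : H,
      csummable J (fun j => `|Lam j f| ^+ 2 : R[i]) /\
      A * `|f| ^+ 2 <= csum J (fun j => `|Lam j f| ^+ 2 : R[i]) /\
      csum J (fun j => `|Lam j f| ^+ 2 : R[i]) <= B * `|f| ^+ 2.

Definition gframe_op (R : realType) (H : HilbertSpace R) (Hj : int -> HilbertSpace R)
  (J : set int) (Lam : forall j, H -> Hj j) (Lams : forall j, Hj j -> H) : H -> H :=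
  fun f => hsum J (fun j => Lams j (Lam j f)).

From HB Require Import structures.
From mathcomp Require Import all_boot all_order all_algebra.
From mathcomp Require Import complex.
From mathcomp Require Import finmap.
From mathcomp Require Import all_classical all_reals all_analysis.
From mathcomp Require Import ring.
Import numFieldNormedType.Exports.
Import Order.TTheory GRing.Theory Num.Theory.
Local Open Scope ring_scope.
Local Open Scope classical_set_scope.

(* With g := S^-1 f and u_j := Lam_j^* Lam_j g, the upper frame bound gives
   |sum_(j in T) u_j|^2 <= B sum_(j in T) |Lam_j g|^2 for finite T, so the
   Cauchy tails of the scalar frame series control those of sum_j u_j and the
   series converge over I and over I^c, to a = S_I f and b = S_(I^c) f, with
   a + b = S g = f.  Moving Lam_j across its adjoint turns the two scalar
   series into <a, f> and <f, b>, and then both sides equal <a, b>: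
   <a, a + b> - |a|^2 = <a, b> = <a + b, b> - |b|^2. *)

Lemma lipschitz_continuous {K : numFieldType} {V W : normedModType K}
    (k : K) (f : V -> W) :
  0 <= k -> (forall x y, `|f x - f y| <= k * `|x - y|) -> continuous f.
Proof.
move=> k0 fk x; apply/cvgrPdist_lt => e e0.
have k1 : 0 < k + 1 by rewrite ltr_wpDl.
near=> y; apply: le_lt_trans (fk x y) _.
apply: (@le_lt_trans _ _ ((k + 1) * `|x - y|)); first by rewrite ler_wpM2r ?lerDl.
rewrite -ltr_pdivlMl // mulrC; near: y.
by apply: cvgr_dist_lt; rewrite ?divr_gt0.
Unshelve. all: by end_near.
Qed.

Section InnerProduct.
Context {R : realType} {H : HilbertSpace R}.
Local Notation ip := (hip H).

Lemma hipDl x y z : ip (x + y) z = ip x z + ip y z.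
Proof. by have := hip_linear 1 x y z; rewrite scale1r mul1r. Qed.

Lemma hip0l z : ip 0 z = 0.
Proof. by apply: (addrI (ip 0 z)); rewrite -hipDl !addr0. Qed.

Lemma hipZl a x z : ip (a *: x) z = a * ip x z.
Proof. by have := hip_linear a x 0 z; rewrite addr0 hip0l addr0. Qed.

Lemma hipBl x y z : ip (x - y) z = ip x z - ip y z.
Proof. by rewrite hipDl -scaleN1r hipZl mulN1r. Qed.

Lemma hip0r z : ip z 0 = 0.
Proof. by rewrite hip_conj hip0l conjC0. Qed.

Lemma hipDr x y z : ip z (x + y) = ip z x + ip z y.
Proof. by rewrite (hip_conj z) hipDl rmorphD (hip_conj z x) (hip_conj z y). Qed.

Lemma hipZr a x z : ip z (a *: x) = a^* * ip z x.
Proof. by rewrite (hip_conj z) hipZl rmorphM (hip_conj z x). Qed.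

Lemma hipBr x y z : ip z (x - y) = ip z x - ip z y.
Proof. by rewrite -scaleN1r hipDr hipZr rmorphN1 mulN1r. Qed.

Lemma hip_suml (s : seq int) (F : int -> H) z :
  ip (\sum_(j <- s) F j) z = \sum_(j <- s) ip (F j) z.
Proof. by elim: s => [|a s IH]; rewrite ?big_nil ?hip0l // !big_cons hipDl IH. Qed.

Lemma hip_sumr (s : seq int) (F : int -> H) z :
  ip z (\sum_(j <- s) F j) = \sum_(j <- s) ip z (F j).
Proof. by elim: s => [|a s IH]; rewrite ?big_nil ?hip0r // !big_cons hipDr IH. Qed.

Lemma hip_normCS x y : `|ip x y| <= `|x| * `|y|.
Proof.
have [->|y0] := eqVneq y 0; first by rewrite hip0r normr0 mulr_ge0.
set n := `|y| ^+ 2; set c := ip x y.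
have n_gt0 : 0 < n by rewrite exprn_gt0 ?normr_gt0.
(* expand 0 <= |x - (c / n) y|^2 *)
have := hip_norm (x - (c / n) *: y); rewrite !(hipBl, hipBr, hipZl, hipZr).
rewrite !hip_norm -/n -/c [ip y x]hip_conj -/c.
rewrite rmorphM fmorphV /= (geC0_conj (ltW n_gt0)) => E.
have : 0 <= `|x| ^+ 2 - `|c| ^+ 2 / n.
  rewrite normCK; have -> : `|x| ^+ 2 - c * c^* / n = `|x - (c / n) *: y| ^+ 2.
    by rewrite -E; field; rewrite gt_eqF.
  exact: exprn_ge0.
rewrite subr_ge0 ler_pdivrMr // => le_c.
by rewrite -ler_sqr ?nnegrE ?mulr_ge0 // exprMn.
Qed.

Lemma hip_add_sub_sqr a b : ip a (a + b) - `|a| ^+ 2 = ip (a + b) b - `|b| ^+ 2.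
Proof. by rewrite hipDr hipDl -!hip_norm addrAC subrr add0r addrK. Qed.

Lemma hip_continuousl z : continuous (ip ^~ z : H -> R[i]^o).
Proof.
apply: (@lipschitz_continuous _ H R[i]^o `|z|) => // x y.
by rewrite -hipBl mulrC hip_normCS.
Qed.

Lemma hip_continuousr z : continuous (ip z : H -> R[i]^o).
Proof.
by apply: (@lipschitz_continuous _ H R[i]^o `|z|) => // x y; rewrite -hipBr hip_normCS.
Qed.

End InnerProduct.

Lemma fin_net_proper (I : set int) : ProperFilter (fin_net I).
Proof.
split; first by move=> [A [sAI /(_ A (fsubset_refl _) sAI)]].
split.
- by exists fset0; split => // x /=; rewrite inE.
- move=> P Q [A1 [sA1 P1]] [A2 [sA2 Q2]]; exists (A1 `|` A2)%fset; split.
    by move=> x /=; rewrite inE => /orP [] ?; [apply: sA1 | apply: sA2].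
  move=> B sAB sBI; split.
    by apply: P1 => //; apply: fsubset_trans sAB; apply: fsubsetUl.
  by apply: Q2 => //; apply: fsubset_trans sAB; apply: fsubsetUr.
- by move=> P Q PQ [A [sAI PA]]; exists A; split => // B sAB sBI; apply/PQ/PA.
Qed.
#[global] Existing Instance fin_net_proper.

Lemma near_fin_net_sub (I : set int) :
  \forall B \near fin_net I, [set` B] `<=` I.
Proof. by exists fset0; split => // [x /=|B _ //]; rewrite inE. Qed.

Lemma psum_ge0 {K : numDomainType} (w : int -> K) (A : {fset int}) :
  (forall j, 0 <= w j) -> 0 <= psum w A.
Proof. by move=> w_ge0; apply: sumr_ge0 => j _. Qed.

Lemma psum_fsetD {V : zmodType} (u : int -> V) {A B : {fset int}} :
  (A `<=` B)%fset -> psum u B = psum u A + psum u (B `\` A)%fset.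
Proof.
move=> sAB; rewrite /psum (big_fsetID _ (mem A)) /=; congr (_ + _).
  apply: eq_fbigl => x; rewrite !inE /=.
  by apply/andP/idP => [[]//|xA]; split => //; apply: (fsubsetP sAB).
by apply: eq_fbigl => x; rewrite !inE /= andbC.
Qed.

Section NetSummation.
Context {K : numFieldType} {V : normedModType K}.

Lemma hsummable_cauchy {I : set int} {u : int -> V} : hsummable I u ->
  forall e, 0 < e -> exists A : {fset int}, [set` A] `<=` I /\
    forall T : {fset int}, [set` T] `<=` I -> (forall x, x \in T -> x \notin A) ->
      `|psum u T| < e.
Proof.
move=> [l /cvgrPdist_lt ul] e e0.
have [A [sAI ulA]] := ul _ (divr_gt0 e0 (ltr0Sn K 1)).
exists A; split => // T sTI dTA.
have sAAT : (A `<=` A `|` T)%fset by apply: fsubsetUl.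
have sATI : [set` (A `|` T)%fset] `<=` I.
  by move=> x /=; rewrite inE => /orP [] ?; [apply: sAI | apply: sTI].
have ATA : ((A `|` T) `\` A)%fset = T.
  apply/fsetP => x; rewrite !inE; case xT: (x \in T); last by rewrite orbF; case: (x \in A).
  by rewrite orbT (dTA _ xT).
have -> : psum u T = (l - psum u A) - (l - psum u (A `|` T)%fset).
  by rewrite (psum_fsetD u sAAT) ATA opprB addrC subrKA [psum u A + _]addrC addrK.
apply: le_lt_trans (ler_normB _ _) _.
by rewrite (splitr e) ltrD // ulA.
Qed.

Lemma psum_restrict_cvg (I J : set int) (p : pred int) (u : int -> V) (l : V) :
  I `<=` J -> (forall x, J x -> I x <-> p x) ->
  psum u @ fin_net I --> l ->
  (fun B : {fset int} => psum u [fset x in B | p x]%fset) @ fin_net J --> l.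
Proof.
move=> sIJ Ip ul N /ul [A [sAI uA]]; exists A; split; first by move=> x /sAI /sIJ.
move=> B sAB sBJ; apply: uA.
  apply/fsubsetP => x xA; rewrite !inE (fsubsetP sAB) //=.
  by apply/(Ip x (sIJ _ (sAI _ xA))); apply: sAI.
by move=> x /=; rewrite !inE => /andP [xB px]; apply/(Ip x (sBJ _ xB)).
Qed.

Lemma hsum_split (I J : set int) (u : int -> V) : I `<=` J ->
  hsummable I u -> hsummable (J `\` I) u ->
  hsum J u = hsum I u + hsum (J `\` I) u.
Proof.
move=> sIJ [lI uI] [lC uC].
rewrite /hsum (cvg_lim _ uI) ?(cvg_lim _ uC); try exact: norm_hausdorff.
apply: cvg_lim; first exact: norm_hausdorff.
have -> : psum u = (fun B : {fset int} =>
    psum u [fset x in B | `[< I x >]]%fset + psum u [fset x in B | ~~ `[< I x >]]%fset).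
  by apply: funext => B; rewrite /psum (big_fsetID _ (fun x => `[< I x >])).
apply: cvgD.
  apply: (@psum_restrict_cvg I J (fun x => `[< I x >]) u lI sIJ _ uI).
  by move=> x _; split => /asboolP.
apply: (@psum_restrict_cvg _ J (fun x => ~~ `[< I x >]) u lC _ _ uC) => [x [] //|x Jx].
split => [[_ nIx]|nIx]; first by apply/negP => /asboolP.
by split => // /asboolP; apply/negP.
Qed.

Lemma hsum_comp {W : normedModType K} {I : set int} {u : int -> V} {w : int -> W}
    {phi : V -> W} {a : V} :
  {for a, continuous phi} -> psum u @ fin_net I --> a ->
  (forall B : {fset int}, [set` B] `<=` I -> psum w B = phi (psum u B)) ->
  hsum I w = phi a.
Proof.
move=> phi_a ua wu; apply: cvg_lim; first exact: norm_hausdorff.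
apply: cvg_trans (continuous_cvg _ phi_a ua).
apply: near_eq_cvg; near=> B; apply/esym/wu; near: B; exact: near_fin_net_sub.
Unshelve. all: by end_near.
Qed.

End NetSummation.

Lemma cauchy_hsummable {K : numFieldType} {V : completeNormedModType K}
    (I : set int) (u : int -> V) :
  (forall e, 0 < e -> exists A : {fset int}, [set` A] `<=` I /\
    forall T : {fset int}, [set` T] `<=` I -> (forall x, x \in T -> x \notin A) ->
      `|psum u T| < e) ->
  hsummable I u.
Proof.
move=> tail; exists (lim (psum u @ fin_net I)); apply: cauchy_cvg.
apply: cauchy_exP => e e0; have [A [sAI tailA]] := tail e e0.
exists (psum u A); exists A; split => // B sAB sBI.
rewrite -ball_normE /= (psum_fsetD u sAB) opprD addNKr normrN.
apply: tailA => [x /=|x]; rewrite !inE => /andP [xA xB] //; exact: sBI.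
Qed.

Lemma psum_le_csum {R : realType} (J : set int) (w : int -> R[i]) (T : {fset int}) :
  (forall j, 0 <= w j) -> csummable J w -> csum J w \is Num.real ->
  [set` T] `<=` J -> psum w T <= csum J w.
Proof.
move=> w_ge0 [l wl] + sTJ; rewrite /csum /hsum (cvg_lim _ wl) //.
move=> l_real; apply/ler_addgt0Pr => e e0.
move/cvgrPdist_lt: wl => /(_ e e0) [A [sAJ wlA]].
have sTAT : (T `<=` A `|` T)%fset by apply: fsubsetUr.
have sATJ : [set` (A `|` T)%fset] `<=` J.
  by move=> x /=; rewrite inE => /orP [] ?; [apply: sAJ | apply: sTJ].
apply: (@le_trans _ _ (psum w (A `|` T)%fset)).
  by rewrite (psum_fsetD w sTAT) lerDl psum_ge0.
apply: real_ler_distlDr; first by rewrite rpredB // ger0_real // psum_ge0.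
by rewrite distrC ltW // wlA // fsubsetUl.
Qed.

Section Synthesis.
Context {R : realType} {H : HilbertSpace R} {Hj : int -> HilbertSpace R}.
Context {J : set int} {Lam : forall j, H -> Hj j} {Lams : forall j, Hj j -> H}.
Hypothesis Lam_adj : forall j, J j -> is_adjoint (Lam j) (Lams j).
Hypothesis Lam_summable : forall v, csummable J (fun j => `|Lam j v| ^+ 2 : R[i]).
Context {B : R[i]}.
Hypothesis B_gt0 : 0 < B.
Hypothesis Lam_bessel : forall v T, [set` T] `<=` J ->
  psum (fun j => `|Lam j v| ^+ 2 : R[i]) T <= B * `|v| ^+ 2.

Lemma hip_adjl j (y : Hj j) (v : H) : J j -> hip H (Lams j y) v = hip (Hj j) y (Lam j v).
Proof. by move=> Jj; rewrite hip_conj -Lam_adj // -hip_conj. Qed.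

Lemma norm_psum_synthesis_le g T : [set` T] `<=` J ->
  `|psum (fun j => Lams j (Lam j g)) T| ^+ 2 <=
    B * psum (fun j => `|Lam j g| ^+ 2 : R[i]) T.
Proof.
move=> sTJ; set v := psum _ T; set S := psum _ T; set X := `|v| ^+ 2.
have X_le : X <= \sum_(j <- T) `|Lam j g| * `|Lam j v|.
  apply: le_trans (real_ler_norm _) _; first by rewrite ger0_real ?exprn_ge0.
  have -> : X = \sum_(j <- T) hip (Hj j) (Lam j g) (Lam j v).
    rewrite /X -hip_norm {1}/v /psum hip_suml; apply: eq_big_seq => j jT.
    by rewrite hip_adjl //; apply: sTJ.
  by apply: le_trans (ler_norm_sum _ _ _) (ler_sum _ _) => j _; apply: hip_normCS.
(* AM-GM, weighted so that the [Lam j v] part is absorbed by the Bessel bound *)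
have amgm : B * X *+ 2 <= B ^+ 2 * S + B * X.
  apply: (@le_trans _ _ (\sum_(j <- T) ((B * `|Lam j g|) ^+ 2 + `|Lam j v| ^+ 2))).
    apply: le_trans (ler_wMn2r 2 (ler_wpM2l (ltW B_gt0) X_le)) _.
    rewrite mulr_sumr -sumrMnl; apply: ler_sum => j _; rewrite mulrA.
    by apply: (real_leif_mean_square_scaled _ _).1; apply: ger0_real; rewrite // mulr_ge0 // ltW.
  rewrite big_split /= lerD //; last exact: Lam_bessel.
  by rewrite /S /psum mulr_sumr; apply: ler_sum => j _; rewrite exprMn.
by move: amgm; rewrite mulr2n lerD2r expr2 -mulrA ler_pM2l.
Qed.

Lemma synthesis_hsummable g I : I `<=` J -> hsummable I (fun j => Lams j (Lam j g)).
Proof.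
move=> sIJ; apply: cauchy_hsummable => e e0.
have e2B_gt0 : 0 < e ^+ 2 / B by rewrite divr_gt0 ?exprn_gt0.
have [A [sAJ tailA]] := @hsummable_cauchy _ R[i]^o _ _ (Lam_summable g) _ e2B_gt0.
exists [fset x in A | `[< I x >]]%fset; split.
  by move=> x /=; rewrite !inE /= => /andP [_ /asboolP].
move=> T sTI dT; have sTJ : [set` T] `<=` J by move=> x /sTI /sIJ.
have /tailA : forall x, x \in T -> x \notin A.
  by move=> x xT; move: (dT x xT); rewrite !inE /= (asboolT (sTI x xT)) andbT.
move=> /(_ sTJ); rewrite ger0_norm ?psum_ge0 // => tail.
rewrite -(ltr_sqr (normr_ge0 _) (ltW e0)).
apply: le_lt_trans (norm_psum_synthesis_le g T sTJ) _.
by rewrite mulrC -ltr_pdivlMr.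
Qed.

End Synthesis.

Lemma gframe_psum_le {R : realType} {H : HilbertSpace R} {Hj : int -> HilbertSpace R}
    {J : set int} {Lam : forall j, H -> Hj j} :
  gframe J Lam -> exists2 B : R[i], 0 < B & forall v T, [set` T] `<=` J ->
    psum (fun j => `|Lam j v| ^+ 2 : R[i]) T <= B * `|v| ^+ 2.
Proof.
move=> [A [B [A_gt0 [leAB frame]]]]; exists B; first exact: lt_le_trans leAB.
move=> v T sTJ; have [summable [_ le_B]] := frame v.
have sum_real : csum J (fun j => `|Lam j v| ^+ 2 : R[i]) \is Num.real.
  by rewrite (ler_real le_B) ger0_real // mulr_ge0 // (le_trans (ltW A_gt0)).
by apply: le_trans le_B; apply: psum_le_csum.
Qed.

Theorem theorem3p1 (R : realType) (H : HilbertSpace R) (Hj : int -> HilbertSpace R)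
  (J : set int) (Lam : forall j, H -> Hj j) (Lams : forall j, Hj j -> H)
  (Sinv : H -> H) (I : set int) :
  separable H ->
  (forall j, J j -> separable (Hj j)) ->
  (forall j, J j -> bounded_linear (Lam j)) ->
  (forall j, J j -> is_adjoint (Lam j) (Lams j)) ->
  gframe J Lam ->
  cancel (gframe_op J Lam Lams) Sinv ->
  cancel Sinv (gframe_op J Lam Lams) ->
  I `<=` J ->
  let Ic := J `\` I in
  let Lamt := fun j (f : H) => Lam j (Sinv f) in
  let SI := fun (K : set int) (f : H) => hsum K (fun j => Lams j (Lamt j f)) in
  forall f : H,
    csum I (fun j => hip (Hj j) (Lamt j f) (Lam j f)) - `|SI I f| ^+ 2 =
    csum Ic (fun j => (hip (Hj j) (Lamt j f) (Lam j f))^*) - `|SI Ic f| ^+ 2.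
Proof.
move=> _ _ _ Lam_adj frame _ SK sIJ Ic Lamt SI f.
have [B B_gt0 bessel] := gframe_psum_le frame.
have summable v : csummable J (fun j => `|Lam j v| ^+ 2 : R[i]).
  by case: frame => [? [? [_ [_ /(_ v) []]]]].
set g := Sinv f; set u := fun j => Lams j (Lam j g).
have sIcJ : Ic `<=` J by move=> x [].
have [a uI] := synthesis_hsummable Lam_adj summable B_gt0 bessel g I sIJ.
have [b uIc] := synthesis_hsummable Lam_adj summable B_gt0 bessel g Ic sIcJ.
have SI_a : SI I f = a by apply: cvg_lim uI; exact: norm_hausdorff.
have SI_b : SI Ic f = b by apply: cvg_lim uIc; exact: norm_hausdorff.
have f_ab : f = a + b.
  by rewrite -SI_a -SI_b -hsum_split //; [rewrite -[LHS]SK | exists a | exists b].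
have csum_a : csum I (fun j => hip (Hj j) (Lamt j f) (Lam j f)) = hip H a f.
  apply: (hsum_comp (hip_continuousl f a) uI) => T sTI.
  rewrite /psum hip_suml; apply: eq_big_seq => j jT.
  by rewrite (hip_adjl Lam_adj) //; apply/sIJ/sTI.
have csum_b : csum Ic (fun j => (hip (Hj j) (Lamt j f) (Lam j f))^*) = hip H f b.
  apply: (hsum_comp (hip_continuousr f b) uIc) => T sTIc.
  rewrite /psum hip_sumr; apply: eq_big_seq => j jT.
  by rewrite -Lam_adj -?hip_conj //; apply/sIcJ/sTIc.
by rewrite csum_a csum_b SI_a SI_b {}f_ab hip_add_sub_sqr.
Qed.
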